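(* Fix $t\ge 0$. Let $\sigma=\{x_1,\dots,x_m\}\subseteq\mathcal C$ and $\tau=\{y_1,\dots,y_n\}\subseteq\mathcal Y^\circ$ be finite subsets, and set $A:=\max_i r_{\mathcal C}(x_i)$, $B:=\max_j r_{\mathcal Y}(y_j)$. Then $\sigma\cup\tau$ is a simplex of the intrinsic Čech complex $\check{C}_t(\mathcal X,d_\theta)$ if and only if at least one of the following holds: (C) there exists $z\in\mathcal C$ with $z\in\bigcap_{i=1}^m \overline{B}_{\mathcal C}(x_i,t)$ and $\|(r_{\mathcal C}(z),B)\|_{\ell^p}\le t$; (Y) there exists $w\in\mathcal Y$ with $w\in\bigcap_{j=1}^n \overline{B}_{\mathcal Y}(y_j,t)$ and $\|(A,r_{\mathcal Y}(w))\|_{\ell^p}\le t$.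
   Context: Let $A$ be a unital $C^*$-algebra, $H$ a Hilbert space, $\mathcal X=\mathrm{CB}(A,B(H))$, $\mathcal C=\mathrm{CP}(A,B(H))$ with Bures distance $\beta$. Fix $\theta\in\mathcal C$, $\lambda>0$, $\alpha\in(0,1]$, $p\in[1,\infty]$, and let $d_\theta=\beta^{BK}_{\theta,\lambda,p,\alpha}$ be the Bures--Kuratowski metric. Let $\mathcal Y=(\mathcal X\setminus\mathcal C)\sqcup\{\ast\}$ with metric $d_{\mathrm{reg}}$ ($=\lambda\delta_{\mathrm{reg}}^\alpha$ on non-CP pairs and $\lambda\delta_{\mathrm{reg}}(\cdot,0)^\alpha$ to $\ast$, $\delta_{\mathrm{reg}}$ the regular-representation metric), $\mathcal Y^\circ=\mathcal Y\setminus\{\ast\}$. Then $(\mathcal X,d_\theta)$ is the $\ell^p$ wedge of $(\mathcal C,\beta,\theta)$ and $(\mathcal Y,d_{\mathrm{reg}},\ast)$ with $\theta\sim\ast$: $d_\theta=\beta$ on $\mathcal C$, $d_\theta=d_{\mathrm{reg}}$ on $\mathcal Y$, and $d_\theta(x,y)=\|(r_{\mathcal C}(x),r_{\mathcal Y}(y))\|_{\ell^p}$ for $x\in\mathcal C$, $y\in\mathcal Y$, where $r_{\mathcal C}(x)=\beta(x,\theta)$, $r_{\mathcal Y}(y)=d_{\mathrm{reg}}(y,\ast)$. $\overline{B}_{\mathcal C}$, $\overline{B}_{\mathcal Y}$ are closed balls in $(\mathcal C,\beta)$, $(\mathcal Y,d_{\mathrm{reg}})$. The intrinsic Čech complex $\check{C}_t(Z,d)$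 of a metric space is the nerve of its closed radius-$t$ balls: a finite $\sigma\subseteq Z$ is a simplex iff $\bigcap_{z\in\sigma}\overline{B}_Z(z,t)\neq\varnothing$. *)

From Stdlib Require List.
From mathcomp Require Import all_boot all_order all_algebra.
From mathcomp Require Import all_classical all_reals all_analysis.
Set Implicit Arguments. Unset Strict Implicit. Unset Printing Implicit Defensive.
Import Order.TTheory GRing.Theory Num.Theory.
Local Open Scope ring_scope.

Definition is_metric (R : realType) (T : Type) (d : T -> T -> R) : Prop :=
  [/\ (forall x y, 0 <= d x y),
      (forall x y, d x y = 0 <-> x = y),
      (forall x y, d x y = d y x) &
      (forall x y z, d x z <= d x y + d y z)].

Definition lp2 (R : realType) (p : \bar R) (a b : R) : R :=
  match p with
  | EFin q => powR (powR `|a| q + powR `|b| q) q^-1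
  | _ => Num.max `|a| `|b|
  end.

(* The ell^p wedge of (C, dC, theta) and (Y, dY, star), where Y = option Yo,
   with None playing the role of the base point star, and Yo = Y minus star.
   The wedge carrier is C + Yo  (the base point star is identified with theta). *)
Definition wedge_dist (R : realType) (C Yo : Type) (dC : C -> C -> R)
  (dY : option Yo -> option Yo -> R) (theta : C) (p : \bar R)
  (u v : (C + Yo)%type) : R :=
  match u, v with
  | inl x, inl x' => dC x x'
  | inr y, inr y' => dY (Some y) (Some y')
  | inl x, inr y => lp2 p (dC x theta) (dY (Some y) None)
  | inr y, inl x => lp2 p (dC x theta) (dY (Some y) None)
  end.

Definition cball (R : realType) (Z : Type) (d : Z -> Z -> R) (x : Z) (t : R)
  : Z -> Prop := fun z => d x z <= t.

Definition cech_simplex (R : realType) (Z : Type) (d : Z -> Z -> R) (t : R)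
  (s : seq Z) : Prop :=
  exists z : Z, forall x, List.In x s -> cball d x t z.

From Stdlib Require List.
From mathcomp Require Import all_boot all_order all_algebra.
From mathcomp Require Import all_classical all_reals all_analysis.
Set Implicit Arguments. Unset Strict Implicit. Unset Printing Implicit Defensive.
Import Order.TTheory GRing.Theory Num.Theory.
Local Open Scope ring_scope.

(** A common point of the balls is either in [C] or in [Y°].  A centre [z]
    in [C] is at wedge distance [||(r_C z, r_Y y)||_p] from each [y] of [tau];
    since the [l^p] norm is monotone in each coordinate and [B] is attained on
    [tau], these conditions collapse to the single one [||(r_C z, B)||_p <= t],
    which is (C).  Symmetrically a centre in [Y°] gives (Y).  Conversely (C)
    or (Y) provides such a centre, except when (Y) holds with [w = *]; then
    [A <= t] and [r_Y y <= t] on [tau], so [theta] itself is a common point. *)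

Section Lp2.
Variables (R : realType) (p : \bar R).
Hypothesis p_ge1 : (1 <= p)%E.

Lemma lp2C a b : lp2 p a b = lp2 p b a.
Proof. by case: p => [q||] /=; rewrite ?(addrC (powR `|a| q)) // maxC. Qed.

Lemma lp2_homo_norm a b b' : `|b| <= `|b'| -> lp2 p a b <= lp2 p a b'.
Proof.
case: p p_ge1 => [q||] //= q_ge1 bb'; last by rewrite ge_max !le_max lexx bb' !orbT.
have q_ge0 : 0 <= q by rewrite lee_fin in q_ge1; apply: le_trans q_ge1.
apply: ge0_ler_powR; rewrite ?invr_ge0 ?nnegrE ?addr_ge0 ?powR_ge0 //.
by rewrite lerD2l; apply: ge0_ler_powR; rewrite ?nnegrE.
Qed.

Lemma lp2x0 a : lp2 p a 0 = `|a|.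
Proof.
case: p p_ge1 => [q||] //= q_ge1; last by rewrite normr0 max_l.
have q_gt0 : 0 < q by rewrite lee_fin in q_ge1; apply: lt_le_trans q_ge1.
by rewrite normr0 powR0 ?gt_eqF // addr0 -powRrM mulfV ?gt_eqF // powRr1.
Qed.

Lemma lp20x b : lp2 p 0 b = `|b|.
Proof. by rewrite lp2C lp2x0. Qed.

End Lp2.

Section BigMax.
Variables (R : realType) (T : Type) (f : T -> R).

Lemma le_bigmax0 s x : List.In x s -> f x <= \big[Num.max/0]_(y <- s) f y.
Proof.
elim: s => //= a s IH [->|/IH fx_le]; rewrite big_cons le_max ?lexx //.
by rewrite fx_le orbT.
Qed.

Lemma bigmax0_attained s : s <> [::] -> (forall x, 0 <= f x) ->
  exists2 x, List.In x s & \big[Num.max/0]_(y <- s) f y = f x.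
Proof.
move=> + f_ge0; elim: s => //= a [|b s] IH _.
  by exists a; [left | rewrite big_cons big_nil max_l].
rewrite big_cons; have [//|x xs ->] := IH.
by case: (leP (f a) (f x)) => _; [exists x; [right|] | exists a; [left|]].
Qed.

Lemma lp2_bigmax0_le (p : \bar R) s a t : (1 <= p)%E ->
  s <> [::] -> (forall x, 0 <= f x) ->
  (forall x, List.In x s -> lp2 p a (f x) <= t) <->
  lp2 p a (\big[Num.max/0]_(y <- s) f y) <= t.
Proof.
move=> p_ge1 s_neq0 f_ge0; have [xm xms max_xm] := bigmax0_attained s_neq0 f_ge0.
split=> [/(_ xm xms) | le_t x xs]; first by rewrite max_xm.
apply: le_trans le_t; apply: lp2_homo_norm; rewrite // !ger0_norm ?max_xm //.
by rewrite -max_xm; apply: le_bigmax0.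
Qed.

End BigMax.

Lemma forall_in_cat_map_inl_inr (A B : Type) (P : (A + B)%type -> Prop) s s' :
  (forall u, List.In u (map inl s ++ map inr s') -> P u) <->
  (forall x, List.In x s -> P (inl x)) /\ (forall y, List.In y s' -> P (inr y)).
Proof.
split=> [H | [Hl Hr] u].
  by split=> v vs; apply: H; apply/List.in_app_iff; [left|right]; apply: List.in_map.
by case/List.in_app_iff => /List.in_map_iff [v [<- vs]]; [apply: Hl | apply: Hr].
Qed.

Section Wedge.
Variables (R : realType) (C Yo : Type).
Variables (dC : C -> C -> R) (dY : option Yo -> option Yo -> R) (theta : C).
Variables (p : \bar R) (t : R) (sigma : seq C) (tau : seq Yo).
Hypotheses (dC_metric : is_metric dC) (dY_metric : is_metric dY).
Hypothesis p_ge1 : (1 <= p)%E.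
Hypotheses (sigma_neq0 : sigma <> [::]) (tau_neq0 : tau <> [::]).

Let rC x := dC x theta.
Let rY y := dY y None.
Let A := \big[Num.max/0]_(x <- sigma) rC x.
Let B := \big[Num.max/0]_(y <- tau) rY (Some y).
Let d := wedge_dist dC dY theta p.

Let rC_ge0 x : 0 <= rC x. Proof. by have [->] := dC_metric. Qed.
Let rY_ge0 y : 0 <= rY y. Proof. by have [->] := dY_metric. Qed.

Lemma cech_simplex_wedgeE :
  cech_simplex d t (map inl sigma ++ map inr tau) <->
  (exists z, (forall x, List.In x sigma -> cball dC x t z) /\ lp2 p (rC z) B <= t)
  \/
  (exists y0, (forall y, List.In y tau -> cball dY (Some y) t (Some y0))
              /\ lp2 p A (rY (Some y0)) <= t).
Proof.
have centre_inl z : (forall x, List.In x tau -> lp2 p (rC z) (rY (Some x)) <= t)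
    <-> lp2 p (rC z) B <= t.
  exact: (lp2_bigmax0_le (f := fun y => rY (Some y))).
have centre_inr y0 : (forall x, List.In x sigma -> lp2 p (rC x) (rY (Some y0)) <= t)
    <-> lp2 p A (rY (Some y0)) <= t.
  rewrite lp2C -(lp2_bigmax0_le (f := rC)) //.
  by split=> H x /H; rewrite lp2C.
rewrite /cech_simplex; split.
- case=> [[z|y0] /forall_in_cat_map_inl_inr [Hl Hr]].
  + by left; exists z; split; last by apply/centre_inl.
  + by right; exists y0; split; last by apply/centre_inr.
- case=> [[z [Hl /centre_inl Hr]] | [y0 [Hr /centre_inr Hl]]].
  + by exists (inl z); apply/forall_in_cat_map_inl_inr.
  + by exists (inr y0); apply/forall_in_cat_map_inl_inr.
Qed.

Lemma cech_simplex_base_centre :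
  (forall y, List.In y tau -> cball dY (Some y) t None) -> lp2 p A (rY None) <= t ->
  exists z, (forall x, List.In x sigma -> cball dC x t z) /\ lp2 p (rC z) B <= t.
Proof.
have [_ dCE _ _] := dC_metric; have [_ dYE _ _] := dY_metric.
have rY_base : rY None = 0 by apply/dYE.
have rC_base : rC theta = 0 by apply/dCE.
rewrite rY_base lp2x0 // => Hr A_le; exists theta; split.
  move=> x xs; apply: le_trans (le_trans (le_bigmax0 rC xs) (ler_norm _)) A_le.
rewrite rC_base; apply: (lp2_bigmax0_le (f := fun y => rY (Some y)) _ _ p_ge1 tau_neq0 _).1 => // y ys.
by rewrite lp20x // ger0_norm //; apply: Hr.
Qed.

End Wedge.

Theorem proposition6p24 (R : realType) (C Yo : Type)
  (dC : C -> C -> R) (dY : option Yo -> option Yo -> R) (theta : C)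
  (p : \bar R) (t : R) (sigma : seq C) (tau : seq Yo) :
  is_metric dC -> is_metric dY -> (1 <= p)%E -> 0 <= t ->
  sigma <> [::] -> tau <> [::] ->
  let rC := fun x : C => dC x theta in
  let rY := fun y : option Yo => dY y None in
  let A := \big[Num.max/0]_(x <- sigma) rC x in
  let B := \big[Num.max/0]_(y <- tau) rY (Some y) in
  cech_simplex (wedge_dist dC dY theta p) t
    (map inl sigma ++ map inr tau)
  <->
  ((exists z : C, (forall x, List.In x sigma -> cball dC x t z)
                  /\ lp2 p (rC z) B <= t)
   \/
   (exists w : option Yo, (forall y, List.In y tau -> cball dY (Some y) t w)
                  /\ lp2 p A (rY w) <= t)).
Proof.
move=> dCm dYm p_ge1 _ sigma_neq0 tau_neq0 rC rY A B.
rewrite cech_simplex_wedgeE //; split.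
- case=> [HC | [y0 HY]]; [by left | by right; exists (Some y0)].
- case=> [HC | [[y0|] [Hr Hl]]]; first by left.
  + by right; exists y0.
  + by left; apply: cech_simplex_base_centre.
Qed.
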